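(* Let $N, D, C \in \mathbb{N}$, let $\mathbb{G} = \{0,1\}^{N\times D}\times\{0,1\}^{N\times N}$, let $f:\mathbb{G}\to\{1,\dots,C\}^N$ be a multi-output classifier with components $f_1,\dots,f_N$, and let $(\mathbf{X},\mathbf{A})\in\mathbb{G}$ be a clean graph. Fix the threat-model parameters (global budgets $r_{\mathbf{X}_\mathrm{add}}, r_{\mathbf{X}_\mathrm{del}}, r_{\mathbf{A}_\mathrm{add}}, r_{\mathbf{A}_\mathrm{del}}\in\mathbb{N}_0$, local budgets, and $\sigma$) and let $\mathbb{B}_{\mathcal{G}}$ and $\mathbb{B}_{\mathcal{G}}(\boldsymbol{\rho})$ be as described in the context. Fix a node $n\in\{1,\dots,N\}$, let $\boldsymbol{\psi}^{(n)}\in\{0,1\}^N$ and $\boldsymbol{\Psi}^{(n)}\in\{0,1\}^{N\times N}$ be receptive field indicators of $f_n$, and let $\mathbb{K}^{(n)}$ be a set of certifiable global budgets of $f_n$ (both as defined in the context). Let $(\mathbf{X}',\mathbf{A}')\in\mathbb{B}_{\mathcal{G}}$ be a perturbed graph, and define $\mathbf{X}''\in\{0,1\}^{N\times D}$ and $\mathbf{A}''\in\{0,1\}^{N\times N}$ by $$X''_{i,d} = \psi^{(n)}_i X'_{i,d} + (1-\psi^{(n)}_i) X_{i,d},\qquad A''_{i,j} = \Psi^{(n)}_{i,j} A'_{i,j} + (1-\Psi^{(n)}_{i,j}) A_{i,j}$$ for all $i,j\in\{1,\dots,N\}$, $d\in\{1,\dots,D\}$. If there exists $\boldsymbol{\rho}\in\mathbb{N}_0^4$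 such that $(\mathbf{X}'',\mathbf{A}'')\in\mathbb{B}_{\mathcal{G}}(\boldsymbol{\rho})$ and $\boldsymbol{\rho}\in\mathbb{K}^{(n)}$, then $f_n(\mathbf{X},\mathbf{A}) = f_n(\mathbf{X}',\mathbf{A}')$.
   Context: Threat model. Fix local budget vectors $\mathbf{r}_{\mathbf{X}_\mathrm{add,loc}}, \mathbf{r}_{\mathbf{X}_\mathrm{del,loc}}, \mathbf{r}_{\mathbf{A}_\mathrm{add,loc}}, \mathbf{r}_{\mathbf{A}_\mathrm{del,loc}}\in\mathbb{N}_0^N$ and $\sigma\in\mathbb{N}$. For $\boldsymbol{\rho}=(\rho_1,\rho_2,\rho_3,\rho_4)\in\mathbb{N}_0^4$, $\mathbb{B}_{\mathcal{G}}(\boldsymbol{\rho})$ is the set of $(\mathbf{X}',\mathbf{A}')\in\mathbb{G}$ such that: $|\{(m,d): X_{m,d}=0\neq X'_{m,d}\}|\le\rho_1$, $|\{(m,d): X_{m,d}=1\neq X'_{m,d}\}|\le\rho_2$, $|\{(m,m'): A_{m,m'}=0\neq A'_{m,m'}\}|\le\rho_3$, $|\{(m,m'): A_{m,m'}=1\neq A'_{m,m'}\}|\le\rho_4$; for every node $m$: $|\{d: X_{m,d}=0\neq X'_{m,d}\}|\le (r_{\mathbf{X}_\mathrm{add,loc}})_m$, $|\{d: X_{m,d}=1\neq X'_{m,d}\}|\le (r_{\mathbf{X}_\mathrm{del,loc}})_m$, $|\{m': A_{m,m'}=0\neq A'_{m,m'}\}|\le (r_{\mathbf{A}_\mathrm{add,loc}})_m$,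 $|\{m': A_{m,m'}=1\neq A'_{m,m'}\}|\le (r_{\mathbf{A}_\mathrm{del,loc}})_m$; and there exists $\mathbb{S}\subseteq\{1,\dots,N\}$ with $|\mathbb{S}|\le\sigma$ such that for all $d$ and $m,m'$: $X'_{m,d}\neq X_{m,d}\Rightarrow m\in\mathbb{S}$ and $A'_{m,m'}\neq A_{m,m'}\Rightarrow (m\in\mathbb{S}\text{ or } m'\in\mathbb{S})$. Set $\mathbb{B}_{\mathcal{G}} = \mathbb{B}_{\mathcal{G}}\big((r_{\mathbf{X}_\mathrm{add}}, r_{\mathbf{X}_\mathrm{del}}, r_{\mathbf{A}_\mathrm{add}}, r_{\mathbf{A}_\mathrm{del}})\big)$. Receptive field indicators: $\boldsymbol{\psi}^{(n)}$, $\boldsymbol{\Psi}^{(n)}$ are receptive field indicators of $f_n$ if for all $(\mathbf{X}',\mathbf{A}'),(\tilde{\mathbf{X}},\tilde{\mathbf{A}})\in\mathbb{B}_{\mathcal{G}}$: whenever $\sum_{m=1}^N\sum_{d=1}^D \psi^{(n)}_m \mathbf{1}[X'_{m,d}\neq \tilde X_{m,d}] + \sum_{i,j=1}^N \Psi^{(n)}_{i,j}\mathbf{1}[A'_{i,j}\neq \tilde A_{i,j}] = 0$, we have $f_n(\mathbf{X}',\mathbf{A}') = f_n(\tilde{\mathbf{X}},\tilde{\mathbf{A}})$. Certifiable budgets: with $[k]=\{0,\dots,k\}$ and $\mathbb{L}=[r_{\mathbf{X}_\mathrm{add}}]\times[r_{\mathbf{X}_\mathrm{del}}]\times[r_{\mathbf{A}_\mathrm{add}}]\times[r_{\mathbf{A}_\mathrm{del}}]$,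 $\mathbb{K}^{(n)}$ is any subset of $\{\boldsymbol{\rho}\in\mathbb{L} : \forall (\mathbf{X}',\mathbf{A}')\in\mathbb{B}_{\mathcal{G}}(\boldsymbol{\rho}):\ f_n(\mathbf{X},\mathbf{A}) = f_n(\mathbf{X}',\mathbf{A}')\}$. *)

From mathcomp Require Import all_boot.
Set Implicit Arguments. Unset Strict Implicit. Unset Printing Implicit Defensive.

(* Graphs G = {0,1}^{N x D} x {0,1}^{N x N}; entries are booleans
   (true = 1, false = 0).  Nodes are indexed by 'I_N (0-based). *)
Definition feat (N D : nat) := 'I_N -> 'I_D -> bool.
Definition adj (N : nat) := 'I_N -> 'I_N -> bool.

Section Ball.
Variables (N D : nat).

Definition nX_add (X X' : feat N D) : nat :=
  #|[set md : 'I_N * 'I_D | ~~ X md.1 md.2 && X' md.1 md.2]|.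
Definition nX_del (X X' : feat N D) : nat :=
  #|[set md : 'I_N * 'I_D | X md.1 md.2 && ~~ X' md.1 md.2]|.
Definition nA_add (A A' : adj N) : nat :=
  #|[set mm : 'I_N * 'I_N | ~~ A mm.1 mm.2 && A' mm.1 mm.2]|.
Definition nA_del (A A' : adj N) : nat :=
  #|[set mm : 'I_N * 'I_N | A mm.1 mm.2 && ~~ A' mm.1 mm.2]|.

Definition nX_add_loc (X X' : feat N D) (m : 'I_N) : nat :=
  #|[set d : 'I_D | ~~ X m d && X' m d]|.
Definition nX_del_loc (X X' : feat N D) (m : 'I_N) : nat :=
  #|[set d : 'I_D | X m d && ~~ X' m d]|.
Definition nA_add_loc (A A' : adj N) (m : 'I_N) : nat :=
  #|[set m' : 'I_N | ~~ A m m' && A' m m']|.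
Definition nA_del_loc (A A' : adj N) (m : 'I_N) : nat :=
  #|[set m' : 'I_N | A m m' && ~~ A' m m']|.

Definition ballG (rXa rXd rAa rAd : 'I_N -> nat) (sigma : nat)
    (X : feat N D) (A : adj N) (rho : nat * nat * nat * nat)
    (X' : feat N D) (A' : adj N) : Prop :=
  let '(rho1, rho2, rho3, rho4) := rho in
  [/\ [/\ nX_add X X' <= rho1, nX_del X X' <= rho2,
      nA_add A A' <= rho3 & nA_del A A' <= rho4],
      (forall m, [/\ nX_add_loc X X' m <= rXa m, nX_del_loc X X' m <= rXd m,
                     nA_add_loc A A' m <= rAa m & nA_del_loc A A' m <= rAd m])
    & exists S : {set 'I_N}, [/\ #|S| <= sigma,
        (forall m d, X' m d != X m d -> m \in S) &
        (forall m m', A' m m' != A m m' -> (m \in S) || (m' \in S))]].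

Definition receptive_field (Bg : feat N D -> adj N -> Prop) (T : Type)
    (g : feat N D -> adj N -> T) (psi : 'I_N -> bool) (Psi : 'I_N -> 'I_N -> bool) :
    Prop :=
  forall X1 A1 X2 A2, Bg X1 A1 -> Bg X2 A2 ->
    \sum_(m < N) \sum_(d < D) (psi m : nat) * (X1 m d != X2 m d : nat)
    + \sum_(i < N) \sum_(j < N) (Psi i j : nat) * (A1 i j != A2 i j : nat) = 0 ->
    g X1 A1 = g X2 A2.

Definition certifiable (Bgr : nat * nat * nat * nat -> feat N D -> adj N -> Prop)
    (rXa rXd rAa rAd : nat) (T : Type) (g : feat N D -> adj N -> T)
    (X : feat N D) (A : adj N) (K : nat * nat * nat * nat -> Prop) : Prop :=
  forall rho, K rho ->
    let '(rho1, rho2, rho3, rho4) := rho in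
    [/\ rho1 <= rXa, rho2 <= rXd, rho3 <= rAa, rho4 <= rAd &
        forall X' A', Bgr rho X' A' -> g X A = g X' A'].

End Ball.

From mathcomp Require Import all_boot.

(* The graph (X'', A'') takes the perturbed entries inside the receptive field of
   f_n and the clean ones outside, so f_n cannot distinguish it from (X', A').
   Being certified with a budget rho inside the global budget, f_n also agrees on
   (X'', A'') and on the clean graph (X, A). *)

Lemma ballG_mono (N D : nat) (rXa_loc rXd_loc rAa_loc rAd_loc : 'I_N -> nat)
    (sigma : nat) (X : feat N D) (A : adj N) (r1 r2 r3 r4 s1 s2 s3 s4 : nat) X' A' :
  r1 <= s1 -> r2 <= s2 -> r3 <= s3 -> r4 <= s4 ->
  ballG rXa_loc rXd_loc rAa_loc rAd_loc sigma X A (r1, r2, r3, r4) X' A' ->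
  ballG rXa_loc rXd_loc rAa_loc rAd_loc sigma X A (s1, s2, s3, s4) X' A'.
Proof.
move=> le1 le2 le3 le4 [[h1 h2 h3 h4] local nodes]; split=> //; split.
- exact: leq_trans h1 le1.
- exact: leq_trans h2 le2.
- exact: leq_trans h3 le3.
- exact: leq_trans h4 le4.
Qed.

Lemma weighted_mismatch_select0 (I J : finType) (W : I -> J -> bool) (Y Z : I -> J -> bool) :
  \sum_(i : I) \sum_(j : J) (W i j : nat) * ((if W i j then Y i j else Z i j) != Y i j : nat) = 0.
Proof. by apply: big1 => i _; apply: big1 => j _; case: (W i j); rewrite ?eqxx. Qed.

Theorem lemma1 (N D C : nat)
  (f : feat N D -> adj N -> 'I_N -> 'I_C)
  (X : feat N D) (A : adj N)
  (rXa rXd rAa rAd : nat) (rXa_loc rXd_loc rAa_loc rAd_loc : 'I_N -> nat)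
  (sigma : nat) (sigma_pos : 0 < sigma)
  (n : 'I_N) (psi : 'I_N -> bool) (Psi : 'I_N -> 'I_N -> bool)
  (K : nat * nat * nat * nat -> Prop) :
  let B := ballG rXa_loc rXd_loc rAa_loc rAd_loc sigma X A in
  let BG := B (rXa, rXd, rAa, rAd) in
  receptive_field BG (fun X1 A1 => f X1 A1 n) psi Psi ->
  certifiable B rXa rXd rAa rAd (fun X1 A1 => f X1 A1 n) X A K ->
  forall (X' : feat N D) (A' : adj N), BG X' A' ->
  let X'' := fun i d => if psi i then X' i d else X i d in
  let A'' := fun i j => if Psi i j then A' i j else A i j in
  (exists rho, B rho X'' A'' /\ K rho) ->
  f X A n = f X' A' n.
Proof.
move=> B BG receptive cert X' A' BG_X'A' X'' A'' [[[[r1 r2] r3] r4] [B_X''A'' K_rho]].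
have [le1 le2 le3 le4 certified] := cert _ K_rho.
rewrite (certified _ _ B_X''A'').
apply: receptive => //; first exact: ballG_mono B_X''A''.
by rewrite (@weighted_mismatch_select0 _ _ (fun i _ => psi i)) weighted_mismatch_select0.
Qed.
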